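(* Let $(M,g)$ be a Riemannian manifold and $F_1,\dots,F_k:M\to\mathbb{R}$ smooth, and let $\mathbf{T}$ be the contravariant 2-tensor defined below. Then: (i) $\nabla F_i\otimes\nabla F_j(\alpha,\beta)=0$ for all $\alpha\in\Omega^1_{tan}(M)$, $\beta\in\Omega^1(M)$; (ii) $\mathbf{T}(\alpha,\beta)=\det\Sigma_{(F_1,\dots,F_k)}^{(F_1,\dots,F_k)}\,g^{-1}(\alpha,\beta)$ for all $\alpha\in\Omega^1_{tan}(M)$, $\beta\in\Omega^1(M)$; (iii) $\mathbf{T}(\alpha,\alpha)=\det\Sigma_{(F_1,\dots,F_k)}^{(F_1,\dots,F_k)}\,\|\alpha\|^2$ for all $\alpha\in\Omega^1_{tan}(M)$; (iv) $\mathbf{T}(dF_s,\beta)=0$ for all $s=1,\dots,k$ and all $\beta\in\Omega^1(M)$.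
   Context: $\langle\cdot,\cdot\rangle$ is the inner product of $g$, $\nabla$ the gradient, $g^{-1}$ the inverse metric viewed as a contravariant 2-tensor on 1-forms, $\|\alpha\|^2=g^{-1}(\alpha,\alpha)$. For smooth $f_1,\dots,f_r,g_1,\dots,g_s$, $\Sigma_{(g_1,\dots,g_s)}^{(f_1,\dots,f_r)}$ is the $r\times s$ matrix with entry $\langle\nabla g_b,\nabla f_a\rangle$ in row $a$, column $b$; $\widehat{\cdot}$ denotes omission. $\nabla F_i\otimes\nabla F_j(\alpha,\beta):=\alpha(\nabla F_i)\beta(\nabla F_j)$. Define $$\mathbf{T}:=\sum_{i,j=1}^k(-1)^{i+j+1}\det\Sigma_{(F_1,\dots,\widehat{F_i},\dots,F_k)}^{(F_1,\dots,\widehat{F_j},\dots,F_k)}\nabla F_i\otimes\nabla F_j+\det\Sigma_{(F_1,\dots,F_k)}^{(F_1,\dots,F_k)}g^{-1}$$ (for $k=1$ the determinant of the empty matrix is $1$). $\Omega^1_{tan}(M)=\{\alpha\in\Omega^1(M)\mid \alpha(\nabla F_s)=0,\ s=1,\dots,k\}$. *)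

From HB Require Import structures.
From mathcomp Require Import all_boot all_order all_algebra.
From mathcomp Require Import reals.
Set Implicit Arguments. Unset Strict Implicit. Unset Printing Implicit Defensive.
Import Order.TTheory GRing.Theory Num.Theory.
Local Open Scope ring_scope.

Section Riem.
Variables (R : realType) (M : Type) (n k : nat).
(* g x : the metric at the point x, in a frame of T_xM identified with R^n
   (tangent vectors = column vectors, 1-forms = row vectors). *)
Variable g : M -> 'M[R]_n.
(* dF i x : the differential of F_i at x, a covector (row vector). *)
Variable dF : 'I_k -> M -> 'rV[R]_n.

Definition riemannian_metric : Prop :=
  forall x, (g x)^T = g x /\
    forall v : 'cV[R]_n, v != 0 -> 0 < (v^T *m g x *m v) 0 0.

Definition inner (x : M) (u v : 'cV[R]_n) : R := (u^T *m g x *m v) 0 0.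
Definition ginv (x : M) (a b : 'rV[R]_n) : R := (a *m invmx (g x) *m b^T) 0 0.
Definition norm2 (x : M) (a : 'rV[R]_n) : R := ginv x a a.
Definition grad (i : 'I_k) (x : M) : 'cV[R]_n := invmx (g x) *m (dF i x)^T.
Definition ev (a : 'rV[R]_n) (v : 'cV[R]_n) : R := (a *m v) 0 0.

Definition Sigma (x : M) : 'M[R]_k :=
  \matrix_(a < k, b < k) inner x (grad b x) (grad a x).
(* Sigma^{(F_1..^F_j..F_k)}_{(F_1..^F_i..F_k)}: rows (superscript) omit j,
   columns (subscript) omit i *)
Definition Sigma_minor (x : M) (i j : 'I_k) : 'M[R]_k.-1 :=
  row' j (col' i (Sigma x)).

Definition gradtens (i j : 'I_k) (x : M) (a b : 'rV[R]_n) : R :=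
  ev a (grad i x) * ev b (grad j x).

(* the contravariant 2-tensor T (indices 0-based: (-1)^(i+j+1) has the same
   parity as with 1-based indices) *)
Definition Ttens (x : M) (a b : 'rV[R]_n) : R :=
  \sum_(i < k) \sum_(j < k)
     (-1) ^+ (i + j + 1) * \det (Sigma_minor x i j) * gradtens i j x a b
  + \det (Sigma x) * ginv x a b.

Definition tangential (alpha : M -> 'rV[R]_n) : Prop :=
  forall x s, ev (alpha x) (grad s x) = 0.
End Riem.

From HB Require Import structures.
From mathcomp Require Import all_boot all_order all_algebra.
From mathcomp Require Import reals.
Import Order.TTheory GRing.Theory Num.Theory.
Local Open Scope ring_scope.

(* At a point x, write S for the Gram matrix Sigma of the differentials dF_i
   and w for the covector beta paired with the gradients.  The sum in Ttens
   pairs the minors of S with S itself, so it is minus the adjugate applied to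
   S: for alpha = dF_s it collapses to -det S * w_s, which cancels the term
   det S * g^{-1}(dF_s, beta).  For tangential alpha every pairing with a
   gradient vanishes and only det S * g^{-1}(alpha, beta) survives. *)

Lemma cofactor_expansion_row (R : comPzRingType) (k : nat) (A : 'M[R]_k)
    (s : 'I_k) (w : 'I_k -> R) :
  \sum_(i < k) \sum_(j < k)
     (-1) ^+ (i + j + 1) * \det (row' j (col' i A)) * (A s i * w j)
  = - (\det A * w s).
Proof.
have adjE (j : 'I_k) :
    \sum_(i < k) (-1) ^+ (i + j + 1) * \det (row' j (col' i A)) * A s i
    = - (\det A *+ (s == j)).
  have := congr1 (fun B : 'M[R]_k => B s j) (mul_mx_adj A).
  rewrite !mxE => <-; rewrite -sumrN; apply: eq_bigr => i _.
  by rewrite !mxE /cofactor exprD expr1 (addnC i j) mulrN1 !mulNr mulrC.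
rewrite exchange_big /=.
under eq_bigr => j _ do under eq_bigr => i _ do rewrite mulrA.
under eq_bigr => j _ do rewrite -mulr_suml adjE.
rewrite (bigD1 s) //= eqxx mulr1n mulNr big1 ?addr0 // => j ne_js.
by rewrite eq_sym (negbTE ne_js) mulr0n oppr0 mul0r.
Qed.

Section GradientPairings.
Variables (R : realType) (M : Type) (n k : nat).
Variables (g : M -> 'M[R]_n) (dF : 'I_k -> M -> 'rV[R]_n).
Hypothesis g_riem : riemannian_metric g.

Lemma riemannian_metric_unitmx (x : M) : g x \in unitmx.
Proof.
have [_ g_pos] := g_riem x.
rewrite unitmxE unitfE; apply/negP => /det0P [v v_neq0 vg0].
have : v^T != 0 by rewrite trmx_eq0.
by move/g_pos; rewrite trmxK vg0 mul0mx mxE ltxx.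
Qed.

Lemma Sigma_ev (x : M) (a b : 'I_k) :
  Sigma g dF x a b = ev (dF a x) (grad g dF b x).
Proof.
rewrite /Sigma /inner /ev /grad mxE trmx_mul trmxK -!mulmxA.
rewrite (mulmxA (g x)) mulmxV ?riemannian_metric_unitmx // mul1mx.
by rewrite -[in LHS](trmxK (_ *m _)) mxE !trmx_mul !trmxK mulmxA.
Qed.

Lemma ginv_ev_grad (x : M) (s : 'I_k) (b : 'rV[R]_n) :
  ginv g x (dF s x) b = ev b (grad g dF s x).
Proof.
have [g_sym _] := g_riem x.
have invg_sym : (invmx (g x))^T = invmx (g x) by rewrite trmx_inv g_sym.
rewrite /ginv /ev /grad -[in LHS](trmxK (_ *m _)) mxE !trmx_mul trmxK invg_sym.
by rewrite mulmxA.
Qed.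

Lemma Ttens_tangential (x : M) (a b : 'rV[R]_n) :
  (forall s, ev a (grad g dF s x) = 0) ->
  Ttens g dF x a b = \det (Sigma g dF x) * ginv g x a b.
Proof.
move=> a_tan; rewrite /Ttens big1 ?add0r // => i _.
by rewrite big1 // => j _; rewrite /gradtens a_tan mul0r mulr0.
Qed.

Lemma Ttens_dF (x : M) (s : 'I_k) (b : 'rV[R]_n) :
  Ttens g dF x (dF s x) b = 0.
Proof.
rewrite /Ttens /gradtens ginv_ev_grad.
under eq_bigr => i _ do under eq_bigr => j _ do rewrite -Sigma_ev.
by rewrite cofactor_expansion_row addNr.
Qed.

End GradientPairings.

Theorem proposition4p3 (R : realType) (M : Type) (n k : nat)
    (g : M -> 'M[R]_n) (dF : 'I_k -> M -> 'rV[R]_n) :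
  (0 < k)%N ->
  riemannian_metric g ->
  (* (i) *)
  (forall (i j : 'I_k) (alpha beta : M -> 'rV[R]_n),
      tangential g dF alpha ->
      forall x, gradtens g dF i j x (alpha x) (beta x) = 0) /\
  (* (ii) *)
  (forall alpha beta : M -> 'rV[R]_n,
      tangential g dF alpha ->
      forall x, Ttens g dF x (alpha x) (beta x)
                = \det (Sigma g dF x) * ginv g x (alpha x) (beta x)) /\
  (* (iii) *)
  (forall alpha : M -> 'rV[R]_n,
      tangential g dF alpha ->
      forall x, Ttens g dF x (alpha x) (alpha x)
                = \det (Sigma g dF x) * norm2 g x (alpha x)) /\
  (* (iv) *)
  (forall (s : 'I_k) (beta : M -> 'rV[R]_n),
      forall x, Ttens g dF x (dF s x) (beta x) = 0).
Proof.
move=> _ g_riem; split; [|split; [|split]].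
- by move=> i j alpha beta alpha_tan x; rewrite /gradtens alpha_tan mul0r.
- by move=> alpha beta alpha_tan x; apply: Ttens_tangential.
- by move=> alpha alpha_tan x; apply: Ttens_tangential.
- by move=> s beta x; apply: Ttens_dF.
Qed.
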